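(* Let $r,m\ge0$ and $k\ge1$ be integers and $n\ge0$. Then $$\lim_{q\to1}\frac{\sum_{j=0}^{2n}(-1)^jq^{rj^2+mj}\begin{bmatrix} 2n\\ j\end{bmatrix}_{q^k}}{(q;q^2)_n}=(k-2r)^n.$$
   Context: $(x;q)_n=\prod_{j=0}^{n-1}(1-q^jx)$. The Gaussian binomial coefficient is $\begin{bmatrix} n\\ j\end{bmatrix}_q=\frac{(q;q)_n}{(q;q)_j(q;q)_{n-j}}$ for $0\le j\le n$, a polynomial in $q$; $\begin{bmatrix} n\\ j\end{bmatrix}_{q^k}$ is this with $q$ replaced by $q^k$. The quotient is a rational function of $q$ and the limit is taken as $q\to1$. *)

From Stdlib Require Export Reals.
Open Scope R_scope.

Fixpoint qpoch (x q : R) (n : nat) : R :=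
  match n with
  | O => 1
  | S n' => qpoch x q n' * (1 - q ^ n' * x)
  end.

(* Gaussian binomial [n choose j]_q = (q;q)_n / ((q;q)_j (q;q)_{n-j}).
   Only evaluated at q with q^k <> 1 below (q near 1, q <> 1, q > 0). *)
Definition qbinom (q : R) (n j : nat) : R :=
  qpoch q q n / (qpoch q q j * qpoch q q (n - j)).

(* Write e = 2r - k. The numerator is A_(2n)(0), where
     A_t(i) = sum_j (-1)^j q^(r j^2 + m j) [t, j]_(q^k) q^(i (k (t - j) + 2 r j)).
   By the q-Pascal rule A_(t+1)(i) = f(i) A_t(i) - g(i) (A_t(i+1) - A_t(i)) with
   g(i) = q^(r+m+2ri) and f(i) = q^(ki) - g(i).  The l-th forward differences of f
   and g in i are of exact order (1-q)^l (f itself of order 1-q), so the Leibniz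
   rule for forward differences shows by induction on t that the D-th difference of
   A_t is c_t(D) (1-q)^((t+D)/2) + o(...), where c_0(D) = [D = 0],
   c_(t+1)(D) = D e c_t(D-1) - c_t(D+1), and c_t(D) = 0 when t + D is odd.
   Solving the recursion, c_(2n)(0) = (-e)^n (2n-1)!!, while
   (q;q^2)_n = prod_i (1 - q^(2i+1)) = (2n-1)!! (1-q)^n + o(...). *)

From Stdlib Require Import Reals Lia Lra Factorial ZifyNat.
Open Scope R_scope.

Definition lim1 (f : R -> R) (L : R) : Prop := limit1_in f (fun q => q <> 1) L 1.

(* The radius [1/2] keeps [q] positive, as the Gaussian binomials require. *)
Lemma lim1_near (f g : R -> R) (L : R) :
  (forall q, q <> 1 -> Rabs (q - 1) < 1/2 -> f q = g q) -> lim1 g L -> lim1 f L.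
Proof.
  intros Hfg Hg eps Heps.
  destruct (Hg eps Heps) as [alp [Halp Hclose]].
  exists (Rmin alp (1/2)); split; [apply Rmin_pos; lra|].
  intros q [Hq Hdist]; simpl in *; unfold R_dist in *.
  rewrite Hfg; [apply Hclose; split; [exact Hq|] | exact Hq |].
  - simpl; unfold R_dist; eapply Rlt_le_trans; [exact Hdist | apply Rmin_l].
  - eapply Rlt_le_trans; [exact Hdist | apply Rmin_r].
Qed.

Lemma lim1_const (c : R) : lim1 (fun _ => c) c.
Proof. exact (limit_free (fun _ => c) _ 0 1). Qed.

Lemma lim1_one_sub_pow (s : nat) : lim1 (fun q => (1 - q) ^ s) (0 ^ s).
Proof.
  induction s as [|s IH]; [simpl; apply lim1_const|].
  apply limit_mul; [|exact IH].
  intros eps Heps; exists eps; split; [exact Heps|].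
  intros q [_ Hq]; simpl in *; unfold R_dist in *.
  rewrite Rminus_0_r, Rabs_minus_sym; exact Hq.
Qed.

Lemma one_sub_pow_neq0 (q : R) (e : nat) : q <> 1 -> (1 - q) ^ e <> 0.
Proof. intros Hq; apply pow_nonzero; lra. Qed.

Definition lead1 (X : R -> R) (e : nat) (L : R) : Prop :=
  lim1 (fun q => X q / (1 - q) ^ e) L.

Lemma lead1_near (X Y : R -> R) (e : nat) (L : R) :
  (forall q, q <> 1 -> Rabs (q - 1) < 1/2 -> X q = Y q) -> lead1 Y e L -> lead1 X e L.
Proof.
  intros HXY; apply lim1_near; intros q Hq Hnear; rewrite HXY; auto.
Qed.

Lemma lead1_const (c : R) : lead1 (fun _ => c) 0 c.
Proof.
  apply (lim1_near _ (fun _ => c)); [intros; simpl; field | apply lim1_const].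
Qed.

Lemma lead1_zero (e : nat) : lead1 (fun _ => 0) e 0.
Proof.
  apply (lim1_near _ (fun _ => 0)); [|apply lim1_const].
  intros q Hq _; cbv beta; field; apply one_sub_pow_neq0, Hq.
Qed.

Lemma lead1_plus (X Y : R -> R) (e : nat) (a b : R) :
  lead1 X e a -> lead1 Y e b -> lead1 (fun q => X q + Y q) e (a + b).
Proof.
  intros HX HY; eapply lim1_near; [|exact (limit_plus _ _ _ _ _ _ HX HY)].
  intros q Hq _; cbv beta; field; apply one_sub_pow_neq0, Hq.
Qed.

Lemma lead1_minus (X Y : R -> R) (e : nat) (a b : R) :
  lead1 X e a -> lead1 Y e b -> lead1 (fun q => X q - Y q) e (a - b).
Proof.
  intros HX HY; eapply lim1_near; [|exact (limit_minus _ _ _ _ _ _ HX HY)].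
  intros q Hq _; cbv beta; field; apply one_sub_pow_neq0, Hq.
Qed.

Lemma lead1_scal (c : R) (X : R -> R) (e : nat) (L : R) :
  lead1 X e L -> lead1 (fun q => c * X q) e (c * L).
Proof.
  intros HX; eapply lim1_near; [|exact (limit_mul _ _ _ _ _ _ (lim1_const c) HX)].
  intros q Hq _; cbv beta; field; apply one_sub_pow_neq0, Hq.
Qed.

Lemma lead1_mul (X Y : R -> R) (e1 e2 : nat) (a b : R) :
  lead1 X e1 a -> lead1 Y e2 b -> lead1 (fun q => X q * Y q) (e1 + e2) (a * b).
Proof.
  intros HX HY; eapply lim1_near; [|exact (limit_mul _ _ _ _ _ _ HX HY)].
  intros q Hq _; cbv beta; rewrite pow_add; field; split; apply one_sub_pow_neq0, Hq.
Qed.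

Lemma lead1_lower (X : R -> R) (e h : nat) (L : R) :
  (h <= e)%nat -> (L = 0 \/ (h < e)%nat) -> lead1 X e L -> lead1 X h 0.
Proof.
  intros Hhe Hneg HX.
  replace 0 with (L * 0 ^ (e - h)) by (destruct Hneg; [subst; ring | rewrite pow_i by lia; ring]).
  eapply lim1_near; [|exact (limit_mul _ _ _ _ _ _ HX (lim1_one_sub_pow (e - h)))].
  intros q Hq _; cbv beta; replace e with (h + (e - h))%nat at 1 by lia.
  rewrite pow_add; field; split; apply one_sub_pow_neq0, Hq.
Qed.

Lemma lead1_sum (F : nat -> R -> R) (V : nat -> R) (e N : nat) :
  (forall l, (l <= N)%nat -> lead1 (F l) e (V l)) ->
  lead1 (fun q => sum_f_R0 (fun l => F l q) N) e (sum_f_R0 V N).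
Proof.
  induction N as [|N IH]; intros HF; [exact (HF 0%nat (le_n 0))|].
  apply lead1_plus; [apply IH; auto | apply HF; auto].
Qed.

Lemma lead1_pow (X : R -> R) (e : nat) (L : R) (l : nat) :
  lead1 X e L -> lead1 (fun q => X q ^ l) (e * l) (L ^ l).
Proof.
  intros HX; induction l as [|l IH].
  - rewrite Nat.mul_0_r; apply (lead1_near _ (fun _ => 1)); [reflexivity | apply lead1_const].
  - replace (e * S l)%nat with (e + e * l)%nat by lia.
    exact (lead1_mul _ _ _ _ _ _ HX IH).
Qed.

Lemma lead1_div (X Y : R -> R) (e : nat) (a b : R) :
  lead1 X e a -> lead1 Y e b -> b <> 0 -> lim1 (fun q => X q / Y q) (a / b).
Proof.
  intros HX HY Hb.
  eapply lim1_near; [|exact (limit_mul _ _ _ _ _ _ HX (limit_inv _ _ _ _ HY Hb))].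
  intros q Hq _; cbv beta; pose proof (one_sub_pow_neq0 q e Hq).
  unfold Rdiv; rewrite Rinv_mult, Rinv_inv; set (iY := / Y q); field; auto.
Qed.

Lemma lead1_pow_sub1 (c : nat) : lead1 (fun q => q ^ c - 1) 1 (- INR c).
Proof.
  assert (Hq1 : lead1 (fun q => q - 1) 1 (-1)).
  { apply (lim1_near _ (fun _ => -1)); [|apply lim1_const].
    intros q Hq _; cbv beta; field; lra. }
  induction c as [|c IH].
  - apply (lead1_near _ (fun _ => 0)); [intros; simpl; ring|].
    replace (- INR 0) with 0 by (simpl; ring); apply lead1_zero.
  - apply (lead1_near _ (fun q => ((q ^ c - 1) * (q - 1) + (q ^ c - 1)) + (q - 1))).
    { intros; simpl; ring. }
    replace (- INR (S c)) with (0 + - INR c + -1) by (rewrite S_INR; ring).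
    apply lead1_plus; [apply lead1_plus|]; auto.
    apply (lead1_lower _ (1 + 1) 1 (- INR c * -1)); [lia | right; lia |].
    exact (lead1_mul _ _ _ _ _ _ IH Hq1).
Qed.

Lemma lead1_pow_one (c : nat) : lead1 (fun q => q ^ c) 0 1.
Proof.
  assert (Hsub : lead1 (fun q => q ^ c - 1) 0 0).
  { apply (lead1_lower _ 1 0 (- INR c)); [lia | right; lia | apply lead1_pow_sub1]. }
  pose proof (lead1_plus _ _ 0 0 1 Hsub (lead1_const 1)) as Hsum.
  rewrite Rplus_0_l in Hsum.
  revert Hsum; apply lead1_near; intros; ring.
Qed.

Lemma sum_f_R0_first (F : nat -> R) (N : nat) :
  sum_f_R0 F (S N) = F 0%nat + sum_f_R0 (fun l => F (S l)) N.
Proof. exact (decomp_sum F (S N) (Nat.lt_0_succ N)). Qed.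

Lemma sum_f_R0_single (F : nat -> R) (N l0 : nat) :
  (l0 <= N)%nat -> (forall l, l <> l0 -> F l = 0) -> sum_f_R0 F N = F l0.
Proof.
  intros Hl0 HF; induction N as [|N IH]; simpl.
  - f_equal; lia.
  - destruct (Nat.eq_dec l0 (S N)) as [->|Hne].
    + rewrite sum_eq_R0; [ring|]. intros l Hl; apply HF; lia.
    + rewrite IH, (HF (S N)) by lia; ring.
Qed.

Fixpoint fdiff (f : nat -> R) (D i : nat) : R :=
  match D with
  | O => f i
  | S D => fdiff f D (S i) - fdiff f D i
  end.

Lemma fdiff_ext (f g : nat -> R) (D i : nat) :
  (forall j, f j = g j) -> fdiff f D i = fdiff g D i.
Proof. intros Hfg; revert i; induction D; intros i; simpl; rewrite ?IHD; auto. Qed.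

Lemma fdiff_minus (f g : nat -> R) (D i : nat) :
  fdiff (fun j => f j - g j) D i = fdiff f D i - fdiff g D i.
Proof. revert i; induction D; intros i; simpl; rewrite ?IHD; ring. Qed.

Lemma fdiff_scal (c : R) (f : nat -> R) (D i : nat) :
  fdiff (fun j => c * f j) D i = c * fdiff f D i.
Proof. revert i; induction D; intros i; simpl; rewrite ?IHD; ring. Qed.

Lemma fdiff_const (c : R) (D i : nat) : fdiff (fun _ => c) (S D) i = 0.
Proof. revert i; induction D; intros i; simpl in *; rewrite ?IHD; ring. Qed.

Lemma fdiff_diff (f : nat -> R) (D i : nat) :
  fdiff (fun j => f (S j) - f j) D i = fdiff f (S D) i.
Proof. revert i; induction D; intros i; simpl in *; rewrite ?IHD; reflexivity. Qed.

Lemma fdiff_geom (x : R) (D i : nat) : fdiff (fun j => x ^ j) D i = x ^ i * (x - 1) ^ D.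
Proof. revert i; induction D; intros i; simpl; rewrite ?IHD; simpl; ring. Qed.

(* Gaussian binomial through the q-Pascal rule. Unlike [qbinom] it has no junk
   values: it vanishes for [j > t], and [qbin 1] is the ordinary binomial. *)
Fixpoint qbin (p : R) (t j : nat) : R :=
  match t, j with
  | O, O => 1
  | O, S _ => 0
  | S _, O => 1
  | S t, S j => qbin p t (S j) + p ^ (t - j) * qbin p t j
  end.

Lemma qbin_0 (p : R) (t : nat) : qbin p t 0 = 1.
Proof. destruct t; reflexivity. Qed.

Lemma qbin_gt (p : R) (t j : nat) : (t < j)%nat -> qbin p t j = 0.
Proof.
  revert j; induction t as [|t IH]; intros [|j] Hj; simpl; try lia; auto.
  rewrite !IH by lia; ring.
Qed.

Lemma binom_1 (n : nat) : qbin 1 n 1 = INR n.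
Proof.
  induction n as [|n IH]; [reflexivity|].
  simpl qbin; rewrite IH, qbin_0, pow1, S_INR; ring.
Qed.

Lemma binom_pascal_sum (T : nat -> R) (D : nat) :
  sum_f_R0 (fun l => qbin 1 (S D) l * T l) (S D) =
  sum_f_R0 (fun l => qbin 1 D l * T l) D + sum_f_R0 (fun l => qbin 1 D l * T (S l)) D.
Proof.
  assert (Hlow : sum_f_R0 (fun l => qbin 1 D l * T l) D
                 = T 0%nat + sum_f_R0 (fun l => qbin 1 D (S l) * T (S l)) D).
  { transitivity (sum_f_R0 (fun l => qbin 1 D l * T l) (S D)).
    - rewrite tech5, qbin_gt by lia; ring.
    - rewrite sum_f_R0_first, qbin_0; ring. }
  rewrite sum_f_R0_first, Hlow, qbin_0, Rplus_assoc, <- sum_plus.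
  f_equal; [ring|]; apply sum_eq; intros l _; simpl qbin; rewrite pow1; ring.
Qed.

Lemma fdiff_mul (f g : nat -> R) (D i : nat) :
  fdiff (fun j => f j * g j) D i =
  sum_f_R0 (fun l => qbin 1 D l * (fdiff f l i * fdiff g (D - l) (i + l))) D.
Proof.
  revert i; induction D as [|D IH]; intros i.
  - simpl; rewrite Nat.add_0_r; ring.
  - simpl fdiff at 1; rewrite !IH.
    rewrite (binom_pascal_sum (fun l => fdiff f l i * fdiff g (S D - l) (i + l))).
    rewrite <- minus_sum, <- sum_plus; apply sum_eq; intros l Hl.
    replace (S D - l)%nat with (S (D - l)) by lia.
    replace (S D - S l)%nat with (D - l)%nat by lia.
    replace (S i + l)%nat with (S (i + l)) by lia.
    replace (i + S l)%nat with (S (i + l)) by lia.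
    simpl fdiff; ring.
Qed.

Lemma pow_neq_1 (p : R) (n : nat) : 0 < p -> p <> 1 -> (0 < n)%nat -> p ^ n <> 1.
Proof.
  intros Hp0 Hp1 Hn; destruct (Rlt_dec p 1) as [Hlt|Hge].
  - pose proof (pow_lt_1_compat p n (conj (Rlt_le _ _ Hp0) Hlt) Hn); lra.
  - pose proof (Rlt_pow_R1 p n ltac:(lra) Hn); lra.
Qed.

Section GaussianBinomial.
Variable p : R.
Hypotheses (Hp0 : 0 < p) (Hp1 : p <> 1).

Lemma qpoch_self_neq0 (n : nat) : qpoch p p n <> 0.
Proof.
  induction n as [|n IH]; simpl; [lra|].
  apply Rmult_integral_contrapositive_currified; [exact IH|].
  rewrite Rmult_comm, tech_pow_Rmult.
  pose proof (pow_neq_1 p (S n) Hp0 Hp1 (Nat.lt_0_succ n)); intros Hzero; lra.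
Qed.

Lemma qbinom_0 (t : nat) : qbinom p t 0 = 1.
Proof.
  unfold qbinom; rewrite Nat.sub_0_r; simpl.
  field; apply qpoch_self_neq0.
Qed.

Lemma qbinom_diag (t : nat) : qbinom p t t = 1.
Proof.
  unfold qbinom; rewrite Nat.sub_diag; simpl.
  field; apply qpoch_self_neq0.
Qed.

Lemma qbinom_pascal (t j : nat) : (j < t)%nat ->
  qbinom p (S t) (S j) = qbinom p t (S j) + p ^ (t - j) * qbinom p t j.
Proof.
  intros Hjt; unfold qbinom.
  set (s := (t - S j)%nat); assert (Ht : t = (j + S s)%nat) by lia.
  replace (S t - S j)%nat with (S s) by lia.
  replace (t - S j)%nat with s by lia.
  replace (t - j)%nat with (S s) by lia.
  cbn [qpoch]; rewrite Ht, pow_add.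
  pose proof (qpoch_self_neq0 j); pose proof (qpoch_self_neq0 s).
  pose proof (qpoch_self_neq0 (j + S s)).
  pose proof (pow_neq_1 p (S j) Hp0 Hp1 (Nat.lt_0_succ j)).
  pose proof (pow_neq_1 p (S s) Hp0 Hp1 (Nat.lt_0_succ s)).
  rewrite <- !tech_pow_Rmult in *.
  field; repeat split; auto; intros Hzero; lra.
Qed.

Lemma qbin_qbinom (t j : nat) : (j <= t)%nat -> qbin p t j = qbinom p t j.
Proof.
  revert j; induction t as [|t IH]; intros [|j] Hj.
  - symmetry; apply qbinom_0.
  - lia.
  - symmetry; apply qbinom_0.
  - simpl qbin; destruct (Nat.eq_dec j t) as [->|Hne].
    + rewrite qbin_gt, IH, !qbinom_diag, Nat.sub_diag by lia; ring.
    + rewrite !IH, qbinom_pascal by lia; reflexivity.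
Qed.

End GaussianBinomial.

Definition qbin_sum (a : nat -> R) (p : R) (t : nat) (z w : R) : R :=
  sum_f_R0 (fun j => a j * qbin p t j * z ^ (t - j) * w ^ j) t.

Lemma qbin_sum_succ (a : nat -> R) (c u p : R) (t : nat) (z w : R) :
  (forall j, a (S j) = c * u ^ j * a j) ->
  qbin_sum a p (S t) z w = z * qbin_sum a p t z w + c * w * qbin_sum a p t (p * z) (u * w).
Proof.
  intros Ha; unfold qbin_sum.
  assert (Hz : z * sum_f_R0 (fun j => a j * qbin p t j * z ^ (t - j) * w ^ j) t
               = a 0%nat * z ^ S t
                 + sum_f_R0 (fun j => a (S j) * qbin p t (S j) * z ^ (t - j) * w ^ S j) t).
  { transitivity (sum_f_R0 (fun j => a j * qbin p t j * z ^ (S t - j) * w ^ j) (S t)).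
    - rewrite tech5, (qbin_gt p t (S t)), Rmult_0_r, !Rmult_0_l, Rplus_0_r, scal_sum by lia.
      apply sum_eq; intros j Hj; replace (S t - j)%nat with (S (t - j)) by lia; simpl; ring.
    - rewrite sum_f_R0_first, qbin_0, Nat.sub_0_r; simpl; ring. }
  rewrite sum_f_R0_first, Hz, scal_sum, qbin_0, Nat.sub_0_r, Rplus_assoc, <- sum_plus.
  simpl pow at 2; f_equal; [ring|].
  apply sum_eq; intros j Hj; simpl qbin; simpl Nat.sub.
  rewrite Ha, !Rpow_mult_distr; simpl; ring.
Qed.

Fixpoint lead_coef (e : R) (t D : nat) : R :=
  match t with
  | O => match D with O => 1 | S _ => 0 end
  | S t => INR D * e * lead_coef e t (pred D) - lead_coef e t (S D)
  end.

Lemma lead_coef_odd (e : R) (t D : nat) : ((t + D) mod 2 = 1)%nat -> lead_coef e t D = 0.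
Proof.
  revert D; induction t as [|t IH]; intros D Hodd; cbn [lead_coef].
  - destruct D; [simpl in Hodd; lia | reflexivity].
  - destruct D as [|D].
    + rewrite (IH 1%nat) by lia; simpl; ring.
    + change (Nat.pred (S D)) with D; rewrite (IH D), (IH (S (S D))) by lia; ring.
Qed.

Lemma lead_coef_gt (e : R) (t D : nat) : (t < D)%nat -> lead_coef e t D = 0.
Proof.
  revert D; induction t as [|t IH]; intros [|D] HtD; cbn [lead_coef]; try lia; auto.
  change (Nat.pred (S D)) with D; rewrite (IH D), (IH (S (S D))) by lia; ring.
Qed.

Lemma lead_coef_closed (e : R) (t D j : nat) : t = (D + 2 * j)%nat ->
  lead_coef e t D * INR (fact j) * 2 ^ j = (-1) ^ j * e ^ (D + j) * INR (fact t).
Proof.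
  revert D j; induction t as [|t IH]; intros D j Ht.
  - replace D with 0%nat by lia; replace j with 0%nat by lia; simpl; ring.
  - cbn [lead_coef]; rewrite fact_simpl, mult_INR.
    replace (INR (S t)) with (INR D + 2 * INR j) by (rewrite Ht, plus_INR, mult_INR; simpl; ring).
    destruct D as [|D]; destruct j as [|j]; try lia.
    + pose proof (IH 1%nat j ltac:(lia)) as IH1.
      transitivity (- (lead_coef e t 1 * INR (fact j) * 2 ^ j) * (2 * INR (S j))).
      { rewrite fact_simpl, mult_INR; simpl; ring. }
      rewrite IH1; simpl; ring.
    + pose proof (IH D 0%nat ltac:(lia)) as IH1.
      rewrite (lead_coef_gt e t (S (S D))) by lia.
      transitivity (INR (S D) * e * (lead_coef e t D * INR (fact 0) * 2 ^ 0)); [simpl; ring|].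
      rewrite IH1, !Nat.add_0_r; simpl; ring.
    + pose proof (IH D (S j) ltac:(lia)) as IH1.
      pose proof (IH (S (S D)) j ltac:(lia)) as IH2.
      transitivity (INR (S D) * e * (lead_coef e t D * INR (fact (S j)) * 2 ^ S j)
                    - 2 * INR (S j) * (lead_coef e t (S (S D)) * INR (fact j) * 2 ^ j)).
      { rewrite fact_simpl, mult_INR; simpl; ring. }
      replace (S (S D) + j)%nat with (S (D + S j)) in IH2 by lia.
      replace (S D + S j)%nat with (S (D + S j)) by lia.
      rewrite IH1, IH2; simpl; ring.
Qed.

Fixpoint odd_fact (n : nat) : R :=
  match n with
  | O => 1
  | S n => odd_fact n * INR (2 * n + 1)
  end.

Lemma odd_fact_pos (n : nat) : 0 < odd_fact n.
Proof.
  induction n as [|n IH]; simpl; [lra|].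
  apply Rmult_lt_0_compat; [exact IH | apply lt_0_INR; lia].
Qed.

Lemma odd_fact_fact (n : nat) : odd_fact n * INR (fact n) * 2 ^ n = INR (fact (2 * n)).
Proof.
  induction n as [|n IH]; [simpl; ring|].
  replace (2 * S n)%nat with (S (S (2 * n))) by lia.
  rewrite !fact_simpl, !mult_INR, <- IH; cbn [odd_fact pow].
  rewrite !S_INR, plus_INR, mult_INR; simpl; ring.
Qed.

Lemma lead_coef_even (e : R) (n : nat) : lead_coef e (2 * n) 0 = (- e) ^ n * odd_fact n.
Proof.
  apply (Rmult_eq_reg_r (INR (fact n) * 2 ^ n)).
  - rewrite <- Rmult_assoc, (lead_coef_closed e (2 * n) 0 n) by lia.
    replace (- e) with (-1 * e) by ring.
    rewrite <- odd_fact_fact, Rpow_mult_distr; simpl; ring.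
  - apply Rmult_integral_contrapositive_currified;
      [apply not_0_INR, fact_neq_0 | apply pow_nonzero; lra].
Qed.

Section ShiftedSum.
Variables r m k : nat.

Definition weight (q : R) (j : nat) : R := (-1) ^ j * q ^ (r * j * j + m * j).

Definition shifted_sum (t i : nat) (q : R) : R :=
  qbin_sum (weight q) (q ^ k) t (q ^ (k * i)) (q ^ (2 * r * i)).

Definition gcoef (q : R) (i : nat) : R := q ^ (r + m) * (q ^ (2 * r)) ^ i.
Definition fcoef (q : R) (i : nat) : R := (q ^ k) ^ i - gcoef q i.

Lemma weight_succ (q : R) (j : nat) : weight q (S j) = - q ^ (r + m) * (q ^ (2 * r)) ^ j * weight q j.
Proof.
  unfold weight; replace (r * S j * S j + m * S j)%nat with (r + m + 2 * r * j + (r * j * j + m * j))%nat by ring.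
  rewrite !pow_add, pow_mult; simpl; ring.
Qed.

Lemma shifted_sum_succ (t i : nat) (q : R) :
  shifted_sum (S t) i q
  = fcoef q i * shifted_sum t i q - gcoef q i * (shifted_sum t (S i) q - shifted_sum t i q).
Proof.
  unfold shifted_sum, fcoef, gcoef.
  rewrite (qbin_sum_succ _ (- q ^ (r + m)) (q ^ (2 * r))) by apply weight_succ.
  replace (k * S i)%nat with (k + k * i)%nat by lia.
  replace (2 * r * S i)%nat with (2 * r + 2 * r * i)%nat by lia.
  rewrite !pow_add, !pow_mult; ring.
Qed.

Lemma shifted_sum_qbinom (t : nat) (q : R) : 0 < q -> q <> 1 -> (0 < k)%nat ->
  shifted_sum t 0 q = sum_f_R0 (fun j => (-1) ^ j * q ^ (r * j * j + m * j) * qbinom (q ^ k) t j) t.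
Proof.
  intros Hq0 Hq1 Hk; unfold shifted_sum, qbin_sum; rewrite !Nat.mul_0_r.
  apply sum_eq; intros j Hj.
  rewrite qbin_qbinom by (auto using pow_lt, pow_neq_1).
  rewrite !pow1; unfold weight; ring.
Qed.

Lemma shifted_sum_O (i : nat) (q : R) : shifted_sum 0 i q = 1.
Proof. unfold shifted_sum, qbin_sum, weight; simpl; rewrite !Nat.mul_0_r; simpl; ring. Qed.

Lemma lead1_fdiff_gcoef (l i : nat) : lead1 (fun q => fdiff (gcoef q) l i) l ((- INR (2 * r)) ^ l).
Proof.
  apply (lead1_near _ (fun q => q ^ (r + m) * ((q ^ (2 * r)) ^ i * (q ^ (2 * r) - 1) ^ l))).
  { intros q _ _; unfold gcoef; rewrite fdiff_scal, fdiff_geom; reflexivity. }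
  pose proof (lead1_mul _ _ _ _ _ _ (lead1_pow_one (r + m))
               (lead1_mul _ _ _ _ _ _ (lead1_pow _ _ _ i (lead1_pow_one (2 * r)))
                                      (lead1_pow _ _ _ l (lead1_pow_sub1 (2 * r))))) as H.
  replace (0 + (0 * i + 1 * l))%nat with l in H by lia.
  rewrite pow1, !Rmult_1_l in H; exact H.
Qed.

Lemma lead1_fdiff_fcoef (l i : nat) :
  lead1 (fun q => fdiff (fcoef q) l i) l ((- INR k) ^ l - (- INR (2 * r)) ^ l).
Proof.
  apply (lead1_near _ (fun q => (q ^ k) ^ i * (q ^ k - 1) ^ l - fdiff (gcoef q) l i)).
  { intros q _ _; unfold fcoef; rewrite fdiff_minus, fdiff_geom; reflexivity. }
  apply lead1_minus; [|apply lead1_fdiff_gcoef].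
  pose proof (lead1_mul _ _ _ _ _ _ (lead1_pow _ _ _ i (lead1_pow_one k))
                                    (lead1_pow _ _ _ l (lead1_pow_sub1 k))) as H.
  replace (0 * i + 1 * l)%nat with l in H by lia.
  rewrite pow1, Rmult_1_l in H; exact H.
Qed.

Lemma lead1_fcoef (i : nat) : lead1 (fun q => fcoef q i) 1 (INR (r + m + 2 * r * i) - INR (k * i)).
Proof.
  apply (lead1_near _ (fun q => (q ^ (k * i) - 1) - (q ^ (r + m + 2 * r * i) - 1))).
  { intros q _ _; unfold fcoef, gcoef; rewrite !pow_add, !pow_mult; ring. }
  replace (INR (r + m + 2 * r * i) - INR (k * i))
    with (- INR (k * i) - - INR (r + m + 2 * r * i)) by ring.
  apply lead1_minus; apply lead1_pow_sub1.
Qed.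

End ShiftedSum.

Section Step.
Variables r m k t : nat.
Hypothesis IH : forall D i,
  lead1 (fun q => fdiff (fun j => shifted_sum r m k t j q) D i) ((t + D) / 2)
        (lead_coef (INR (2 * r) - INR k) t D).

Lemma lead1_negligible (X : R -> R) (e1 : nat) (L1 : R) (D i h : nat) :
  lead1 X e1 L1 -> (h <= e1 + (t + D) / 2)%nat ->
  ((t + D) mod 2 = 1 \/ h < e1 + (t + D) / 2)%nat ->
  lead1 (fun q => X q * fdiff (fun j => shifted_sum r m k t j q) D i) h 0.
Proof.
  intros HX Hle Hcase.
  apply (lead1_lower _ (e1 + (t + D) / 2) h (L1 * lead_coef (INR (2 * r) - INR k) t D)); auto.
  - destruct Hcase as [Hodd|Hlt]; [left; rewrite lead_coef_odd by exact Hodd; ring | right; exact Hlt].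
  - apply lead1_mul; auto.
Qed.

Lemma lead1_fpart (D i : nat) :
  lead1 (fun q => sum_f_R0 (fun l => qbin 1 D l *
            (fdiff (fcoef r m k q) l i * fdiff (fun j => shifted_sum r m k t j q) (D - l) (i + l))) D)
        ((S t + D) / 2) (INR D * (INR (2 * r) - INR k) * lead_coef (INR (2 * r) - INR k) t (pred D)).
Proof.
  set (e := INR (2 * r) - INR k).
  set (V := fun l => if (l =? 1)%nat then INR D * e * lead_coef e t (D - 1) else 0).
  replace (INR D * e * lead_coef e t (pred D)) with (sum_f_R0 V D).
  2:{ destruct D as [|D]; [unfold V; simpl; ring|].
      rewrite (sum_f_R0_single V _ 1); [unfold V; simpl; rewrite Nat.sub_0_r; reflexivity | lia |].
      intros l Hl; unfold V; rewrite (proj2 (Nat.eqb_neq l 1) Hl); reflexivity. }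
  apply lead1_sum; intros l Hl.
  destruct l as [|[|l]]; unfold V; simpl Nat.eqb.
  - rewrite <- (Rmult_0_r (qbin 1 D 0)); apply lead1_scal.
    apply (lead1_negligible _ 1 _ _ _ _ (lead1_fcoef r m k i)); lia.
  - replace ((S t + D) / 2)%nat with (1 + (t + (D - 1)) / 2)%nat by lia.
    replace (INR D * e * lead_coef e t (D - 1))
      with (qbin 1 D 1 * (((- INR k) ^ 1 - (- INR (2 * r)) ^ 1) * lead_coef e t (D - 1)))
      by (rewrite binom_1; unfold e; ring).
    apply lead1_scal, lead1_mul; [apply lead1_fdiff_fcoef | apply IH].
  - rewrite <- (Rmult_0_r (qbin 1 D (S (S l)))); apply lead1_scal.
    apply (lead1_negligible _ _ _ _ _ _ (lead1_fdiff_fcoef r m k (S (S l)) i)); lia.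
Qed.

Lemma lead1_gpart (D i : nat) :
  lead1 (fun q => sum_f_R0 (fun l => qbin 1 D l *
            (fdiff (gcoef r m q) l i *
             fdiff (fun j => shifted_sum r m k t (S j) q - shifted_sum r m k t j q) (D - l) (i + l))) D)
        ((S t + D) / 2) (lead_coef (INR (2 * r) - INR k) t (S D)).
Proof.
  set (e := INR (2 * r) - INR k).
  set (V := fun l => if (l =? 0)%nat then lead_coef e t (S D) else 0).
  replace (lead_coef e t (S D)) with (sum_f_R0 V D).
  2:{ rewrite (sum_f_R0_single V _ 0); [reflexivity | lia |].
      intros l Hl; unfold V; rewrite (proj2 (Nat.eqb_neq l 0) Hl); reflexivity. }
  apply lead1_sum; intros l Hl.
  apply (lead1_near _ (fun q => qbin 1 D l *
            (fdiff (gcoef r m q) l i * fdiff (fun j => shifted_sum r m k t j q) (S (D - l)) (i + l)))).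
  { intros q _ _; rewrite (fdiff_diff (fun j => shifted_sum r m k t j q)); reflexivity. }
  destruct l as [|l]; unfold V; simpl Nat.eqb.
  - replace ((S t + D) / 2)%nat with (0 + (t + S (D - 0)) / 2)%nat by lia.
    replace (lead_coef e t (S D)) with (qbin 1 D 0 * ((- INR (2 * r)) ^ 0 * lead_coef e t (S (D - 0))))
      by (rewrite qbin_0, Nat.sub_0_r; simpl; ring).
    apply lead1_scal, lead1_mul; [apply lead1_fdiff_gcoef | apply IH].
  - rewrite <- (Rmult_0_r (qbin 1 D (S l))); apply lead1_scal.
    apply (lead1_negligible _ _ _ _ _ _ (lead1_fdiff_gcoef r m (S l) i)); lia.
Qed.

End Step.

Lemma lead1_fdiff_shifted_sum (r m k t : nat) : forall D i,
  lead1 (fun q => fdiff (fun j => shifted_sum r m k t j q) D i) ((t + D) / 2)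
        (lead_coef (INR (2 * r) - INR k) t D).
Proof.
  induction t as [|t IH]; intros D i.
  - apply (lead1_near _ (fun _ => match D with O => 1 | S _ => 0 end)).
    { intros q _ _; rewrite (fdiff_ext _ _ D i (fun j => shifted_sum_O r m k j q)).
      destruct D; [reflexivity | apply fdiff_const]. }
    destruct D as [|D]; [apply lead1_const | apply lead1_zero].
  - apply (lead1_near _ (fun q =>
      sum_f_R0 (fun l => qbin 1 D l *
        (fdiff (fcoef r m k q) l i * fdiff (fun j => shifted_sum r m k t j q) (D - l) (i + l))) D
      - sum_f_R0 (fun l => qbin 1 D l *
        (fdiff (gcoef r m q) l i *
         fdiff (fun j => shifted_sum r m k t (S j) q - shifted_sum r m k t j q) (D - l) (i + l))) D)).
    { intros q _ _.
      rewrite (fdiff_ext _ _ D i (fun j => shifted_sum_succ r m k t j q)).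
      rewrite fdiff_minus, !fdiff_mul; reflexivity. }
    apply lead1_minus; [apply lead1_fpart | apply lead1_gpart]; exact IH.
Qed.

Lemma lead1_qpoch_odd (n : nat) : lead1 (fun q => qpoch q (q ^ 2) n) n (odd_fact n).
Proof.
  induction n as [|n IH]; [exact (lead1_const 1)|].
  apply (lead1_near _ (fun q => (1 - (q ^ 2) ^ n * q) * qpoch q (q ^ 2) n)).
  { intros q _ _; simpl; ring. }
  replace (odd_fact (S n)) with (INR (2 * n + 1) * odd_fact n) by (simpl; ring).
  apply (lead1_mul _ _ 1 n); [|exact IH].
  apply (lead1_near _ (fun q => -1 * (q ^ (2 * n + 1) - 1))).
  { intros q _ _; rewrite pow_add, pow_mult; ring. }
  replace (INR (2 * n + 1)) with (-1 * - INR (2 * n + 1)) by ring.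
  apply lead1_scal, lead1_pow_sub1.
Qed.

Theorem theorem2p3 (r m k n : nat) (hk : (1 <= k)%nat) :
  limit1_in
    (fun q : R =>
       sum_f_R0
         (fun j => (-1) ^ j * q ^ (r * j * j + m * j) * qbinom (q ^ k) (2 * n) j)
         (2 * n)
       / qpoch q (q ^ 2) n)
    (fun q : R => q <> 1)
    ((INR k - 2 * INR r) ^ n)
    1.
Proof.
  set (e := INR (2 * r) - INR k).
  assert (Hnum : lead1 (fun q => sum_f_R0
             (fun j => (-1) ^ j * q ^ (r * j * j + m * j) * qbinom (q ^ k) (2 * n) j) (2 * n))
             n (lead_coef e (2 * n) 0)).
  { pose proof (lead1_fdiff_shifted_sum r m k (2 * n) 0 0) as H.
    replace ((2 * n + 0) / 2)%nat with n in H by lia.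
    revert H; apply lead1_near; intros q Hq Hnear; simpl fdiff.
    apply Rabs_def2 in Hnear.
    rewrite shifted_sum_qbinom by (lra || lia); reflexivity. }
  replace ((INR k - 2 * INR r) ^ n) with (lead_coef e (2 * n) 0 / odd_fact n).
  - exact (lead1_div _ _ _ _ _ Hnum (lead1_qpoch_odd n) (Rgt_not_eq _ _ (odd_fact_pos n))).
  - rewrite lead_coef_even; unfold e; rewrite mult_INR; simpl INR.
    field_simplify; [f_equal; ring | apply Rgt_not_eq, odd_fact_pos].
Qed.
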